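(* Let $G$ be a two-player stage game with $|V_1^{p,p}|>1$ and $|V_2^{p,p}|>1$. If $G\in\mathcal{G}_{LS}^{m,m}$, then $G\in\mathcal{G}_{LS}^{p,p}$.
   Context: A two-player stage game $G$ has finite nonempty action sets $A_1,A_2$ and payoffs $u_1,u_2:A_1\times A_2\to\mathbb{R}$, extended to mixed strategies by expectation. $G(T)$ is the $T$-round repetition with realized actions observed each round and payoffs the expected sum of stage payoffs; an SPE of $G(T)$ is a strategy profile whose continuation after every history of length $k<T$ is a Nash equilibrium of $G(T-k)$. Regimes: pure-pure ($p,p$): both players restricted to actions (in the stage game and in every round, including deviations); mixed-pure ($m,p$): player 1 may mix, player 2 uses only actions; mixed-mixed ($m,m$): both may mix. For regime $r$, $\mathrm{Nash}^r(G)$ is the set of stage-game profiles available in $r$ from which no player can profitably deviate unilaterally to a strategy available in $r$, and $V_i^r=\{u_i(\sigma):\sigma\in\mathrm{Nash}^r(G)\}$. Locally suboptimal behavior occurs in an SPE $\mu$ of $G(T)$ (regime $r$) if for some history $h$ of length $k<T$, $(\mu_1(h),\mu_2(h))\notin\mathrm{Nash}^r(G)$. $\mathcal{G}_{LS}^r$ is the set of stage games $G$ for which there exist $T\ge1$ and an SPE of $G(T)$ in regime $r$ in which locally suboptimal behavior occurs. *)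

From HB Require Import structures.
From mathcomp Require Import all_boot all_order all_algebra.
From mathcomp Require Import reals.
Set Implicit Arguments. Unset Strict Implicit. Unset Printing Implicit Defensive.
Import Order.TTheory GRing.Theory Num.Theory.
Local Open Scope ring_scope.

Inductive regime := PP | MP | MM.

Definition mixes1 (r : regime) : bool := if r is PP then false else true.
Definition mixes2 (r : regime) : bool := if r is MM then true else false.

Section Game.
Variables (R : realType) (A1 A2 : finType).
Variables (u1 u2 : A1 -> A2 -> R).

Definition is_dist (A : finType) (p : {ffun A -> R}) : Prop :=
  (forall a, 0 <= p a) /\ \sum_(a : A) p a = 1.

Definition is_pure (A : finType) (p : {ffun A -> R}) : Prop :=
  exists a : A, p = [ffun b => (b == a)%:R].

Definition available (mix : bool) (A : finType) (p : {ffun A -> R}) : Prop :=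
  is_dist p /\ (mix = false -> is_pure p).

Definition ueval (u : A1 -> A2 -> R) (p : {ffun A1 -> R}) (q : {ffun A2 -> R}) : R :=
  \sum_(a : A1) \sum_(b : A2) p a * q b * u a b.

Definition NashStage (r : regime) (p : {ffun A1 -> R}) (q : {ffun A2 -> R}) : Prop :=
  [/\ available (mixes1 r) p, available (mixes2 r) q,
      (forall p', available (mixes1 r) p' -> ueval u1 p' q <= ueval u1 p q) &
      (forall q', available (mixes2 r) q' -> ueval u2 p q' <= ueval u2 p q)].

Definition V1 (r : regime) (x : R) : Prop :=
  exists p q, NashStage r p q /\ x = ueval u1 p q.
Definition V2 (r : regime) (x : R) : Prop :=
  exists p q, NashStage r p q /\ x = ueval u2 p q.

Definition more_than_one (V : R -> Prop) : Prop :=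
  exists x y, V x /\ V y /\ x <> y.

(* histories: sequences of realized action profiles, in chronological order *)
Definition history := seq (A1 * A2).

Definition strat1 := history -> {ffun A1 -> R}.
Definition strat2 := history -> {ffun A2 -> R}.

Definition avail_strat1 (r : regime) (s : strat1) : Prop :=
  forall h, available (mixes1 r) (s h).
Definition avail_strat2 (r : regime) (s : strat2) : Prop :=
  forall h, available (mixes2 r) (s h).

Fixpoint cont (u : A1 -> A2 -> R) (s1 : strat1) (s2 : strat2)
    (h : history) (n : nat) : R :=
  match n with
  | 0 => 0
  | n'.+1 => \sum_(a : A1) \sum_(b : A2)
               s1 h a * s2 h b * (u a b + cont u s1 s2 (rcons h (a, b)) n')
  end.

(* (s1, s2) is an SPE of G(T) in regime r: after every history h of length
   k < T, the continuation is a Nash equilibrium of G(T-k) (deviations to any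
   strategy available in regime r). *)
Definition SPE (r : regime) (T : nat) (s1 : strat1) (s2 : strat2) : Prop :=
  [/\ avail_strat1 r s1, avail_strat2 r s2 &
      forall h : history, (size h < T)%N ->
        (forall t1, avail_strat1 r t1 ->
           cont u1 t1 s2 h (T - size h) <= cont u1 s1 s2 h (T - size h)) /\
        (forall t2, avail_strat2 r t2 ->
           cont u2 s1 t2 h (T - size h) <= cont u2 s1 s2 h (T - size h))].

Definition locally_suboptimal (r : regime) (T : nat) (s1 : strat1) (s2 : strat2) : Prop :=
  exists h : history, (size h < T)%N /\ ~ NashStage r (s1 h) (s2 h).

Definition in_GLS (r : regime) : Prop :=
  exists T : nat, (1 <= T)%N /\
    exists s1 s2, SPE r T s1 s2 /\ locally_suboptimal r T s1 s2.

End Game.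

From HB Require Import structures.
From mathcomp Require Import all_boot all_order all_algebra.
From mathcomp Require Import reals.
From mathcomp Require Import lra.
From Stdlib Require Import Classical.
Set Implicit Arguments. Unset Strict Implicit. Unset Printing Implicit Defensive.
Import Order.TTheory GRing.Theory Num.Theory.
Local Open Scope ring_scope.

(* If every pure profile of G were a pure Nash equilibrium, each
   player's payoff would not depend on his own action, so every mixed profile
   would be a (mixed) Nash equilibrium and no SPE in regime (m,m) could be
   locally suboptimal.  Hence some pure profile (a0, b0) is not a pure Nash
   equilibrium.  Since |V_i^{p,p}| > 1, each player i has a "high" and a "low"
   pure stage equilibrium, differing by d_i > 0 in i's payoff.  In G(2k+1) the
   players play (a0, b0) in round one; in the next k rounds they play the
   equilibrium that is low for player 1 if player 1 deviated from a0, and high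
   otherwise; in the last k rounds the same for player 2.  After round one this
   is a history-independent sequence of stage equilibria, hence a Nash
   equilibrium of every subgame (lemmas on stationary play); in round one a
   deviation gains a bounded amount but costs k d_i, which wins for k large. *)

Section PointMass.
Variable R : realType.

Definition pmass (A : finType) (a : A) : {ffun A -> R} := [ffun b => (b == a)%:R].

Lemma sum_pmass (A : finType) (a : A) (F : A -> R) : \sum_x pmass a x * F x = F a.
Proof.
rewrite (bigD1 a) //= ffunE eqxx mul1r big1 ?addr0 // => x /negbTE x_neq_a.
by rewrite ffunE x_neq_a mul0r.
Qed.

Lemma pmass_available (mix : bool) (A : finType) (a : A) : available mix (pmass a).
Proof.
split; last by exists a.
split; first by move=> x; rewrite ffunE ler0n.
by rewrite -(sum_pmass a (fun=> 1)); apply: eq_bigr => x _; rewrite mulr1.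
Qed.

Lemma pure_pmass (A : finType) (p : {ffun A -> R}) :
  available false p -> exists a, p = pmass a.
Proof. by case=> _; apply. Qed.

End PointMass.

Section Expectation.
Variables (R : realType) (A1 A2 : finType).
Implicit Types (u : A1 -> A2 -> R) (p : {ffun A1 -> R}) (q : {ffun A2 -> R}).

Lemma sum2_pmass (a : A1) (b : A2) (F : A1 -> A2 -> R) :
  \sum_x \sum_y pmass R a x * pmass R b y * F x y = F a b.
Proof.
rewrite -(sum_pmass a (F^~ b)); apply: eq_bigr => x _.
by rewrite -(sum_pmass b (F x)) big_distrr /=; apply: eq_bigr => y _; rewrite mulrA.
Qed.

Lemma ueval_pmass u a b : ueval u (pmass R a) (pmass R b) = u a b.
Proof. exact: sum2_pmass. Qed.

Lemma expected_shift u p q c : is_dist p -> is_dist q ->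
  \sum_x \sum_y p x * q y * (u x y + c) = ueval u p q + c.
Proof.
move=> [_ sum_p] [_ sum_q].
have sum_c : \sum_x \sum_y p x * q y * c = c.
  under eq_bigr => x _ do under eq_bigr => y _ do rewrite -mulrA.
  rewrite -[RHS]mul1r -sum_p big_distrl; apply: eq_bigr => x _ /=.
  by rewrite -big_distrr -big_distrl /= sum_q mul1r.
rewrite -[X in _ = _ + X]sum_c /ueval -big_split; apply: eq_bigr => x _.
by rewrite -big_split; apply: eq_bigr => y _; rewrite mulrDr.
Qed.

Lemma expected_le p q (F G : A1 -> A2 -> R) :
  (forall x, 0 <= p x) -> (forall y, 0 <= q y) -> (forall x y, F x y <= G x y) ->
  \sum_x \sum_y p x * q y * F x y <= \sum_x \sum_y p x * q y * G x y.
Proof.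
move=> p_ge0 q_ge0 le_FG; apply: ler_sum => x _; apply: ler_sum => y _.
by apply: ler_wpM2l; [apply: mulr_ge0 | apply: le_FG].
Qed.

Lemma ueval_indep1 u (f : A2 -> R) p q :
  (forall a b, u a b = f b) -> is_dist p -> ueval u p q = \sum_b q b * f b.
Proof.
move=> u_f [_ sum_p]; rewrite /ueval.
transitivity (\sum_a p a * \sum_b q b * f b); last by rewrite -big_distrl /= sum_p mul1r.
apply: eq_bigr => a _; rewrite big_distrr /=; apply: eq_bigr => b _.
by rewrite u_f mulrA.
Qed.

Lemma ueval_indep2 u (g : A1 -> R) p q :
  (forall a b, u a b = g a) -> is_dist q -> ueval u p q = \sum_a p a * g a.
Proof.
move=> u_g [_ sum_q]; rewrite /ueval; apply: eq_bigr => a _.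
rewrite -[in RHS](mul1r (g a)) -sum_q !big_distrl big_distrr /=.
by apply: eq_bigr => b _; rewrite u_g mulrA.
Qed.

End Expectation.

Section RepeatedGame.
Variables (R : realType) (A1 A2 : finType).
Implicit Types (u : A1 -> A2 -> R) (h : history A1 A2).

Lemma cont_pure_round u (s1 : strat1 R A1 A2) (s2 : strat2 R A1 A2) h n a b :
  s1 h = pmass R a -> s2 h = pmass R b ->
  cont u s1 s2 h n.+1 = u a b + cont u s1 s2 (rcons h (a, b)) n.
Proof. by move=> /= -> ->; rewrite sum2_pmass. Qed.

Lemma cont_step_const u (s1 : strat1 R A1 A2) (s2 : strat2 R A1 A2) h n c :
  is_dist (s1 h) -> is_dist (s2 h) ->
  (forall y, cont u s1 s2 (rcons h y) n = c) ->
  cont u s1 s2 h n.+1 = ueval u (s1 h) (s2 h) + c.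
Proof.
move=> dist1 dist2 cont_c /=.
under eq_bigr => a _ do under eq_bigr => b _ do rewrite cont_c.
exact: expected_shift.
Qed.

Section StationaryPlay.
Variables (u1 u2 : A1 -> A2 -> R) (r : regime) (s1 : strat1 R A1 A2) (s2 : strat2 R A1 A2).
Variables (g : history A1 A2) (sigma1 : nat -> {ffun A1 -> R}) (sigma2 : nat -> {ffun A2 -> R}).
Hypothesis sigma_Nash : forall t, NashStage u1 u2 r (sigma1 t) (sigma2 t).
Hypothesis s1_stationary : forall h, s1 (g ++ h) = sigma1 (size h).
Hypothesis s2_stationary : forall h, s2 (g ++ h) = sigma2 (size h).

Lemma sigma1_dist t : is_dist (sigma1 t).
Proof. by case: (sigma_Nash t) => [[]]. Qed.

Lemma sigma2_dist t : is_dist (sigma2 t).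
Proof. by case: (sigma_Nash t) => _ [[]]. Qed.

Definition stationary_value u t n : R :=
  \sum_(i < n) ueval u (sigma1 (t + i)) (sigma2 (t + i)).

Lemma cont_stationary u h n :
  cont u s1 s2 (g ++ h) n = stationary_value u (size h) n.
Proof.
elim: n h => [|n IHn] h; first by rewrite /stationary_value big_ord0.
rewrite (@cont_step_const _ _ _ _ _ (stationary_value u (size h).+1 n)).
- rewrite /stationary_value big_ord_recl addn0 s1_stationary s2_stationary.
  by congr (_ + _); apply: eq_bigr => i _; rewrite /= addSnnS.
- by rewrite s1_stationary; apply: sigma1_dist.
- by rewrite s2_stationary; apply: sigma2_dist.
by move=> y; rewrite rcons_cat IHn size_rcons.
Qed.

Lemma stationary_no_dev1 t1 h n : avail_strat1 r t1 ->
  cont u1 t1 s2 (g ++ h) n <= cont u1 s1 s2 (g ++ h) n.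
Proof.
move=> avail_t1; elim: n h => [|n IHn] h //.
have [dist_t1 _] := avail_t1 (g ++ h).
have [[dist1 _] [dist2 _] best1 _] := sigma_Nash (size h).
set c := stationary_value u1 (size h).+1 n.
have next_c y : cont u1 s1 s2 (rcons (g ++ h) y) n = c.
  by rewrite rcons_cat cont_stationary size_rcons.
rewrite (cont_step_const _ _ next_c) ?s1_stationary ?s2_stationary //.
apply: (@le_trans _ _ (ueval u1 (t1 (g ++ h)) (sigma2 (size h)) + c));
  last by rewrite lerD2r; apply: best1.
rewrite -expected_shift //= s2_stationary.
apply: expected_le => [a | b | a b]; [by case: dist_t1 | by case: dist2 |].
by rewrite lerD2l -(next_c (a, b)) rcons_cat; apply: IHn.
Qed.

Lemma stationary_no_dev2 t2 h n : avail_strat2 r t2 ->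
  cont u2 s1 t2 (g ++ h) n <= cont u2 s1 s2 (g ++ h) n.
Proof.
move=> avail_t2; elim: n h => [|n IHn] h //.
have [dist_t2 _] := avail_t2 (g ++ h).
have [[dist1 _] [dist2 _] _ best2] := sigma_Nash (size h).
set c := stationary_value u2 (size h).+1 n.
have next_c y : cont u2 s1 s2 (rcons (g ++ h) y) n = c.
  by rewrite rcons_cat cont_stationary size_rcons.
rewrite (cont_step_const _ _ next_c) ?s1_stationary ?s2_stationary //.
apply: (@le_trans _ _ (ueval u2 (sigma1 (size h)) (t2 (g ++ h)) + c));
  last by rewrite lerD2r; apply: best2.
rewrite -expected_shift //= s1_stationary.
apply: expected_le => [a | b | a b]; [by case: dist1 | by case: dist_t2 |].
by rewrite lerD2l -(next_c (a, b)) rcons_cat; apply: IHn.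
Qed.

End StationaryPlay.
End RepeatedGame.

Lemma gain_not_worth_loss (R : realFieldType) (x y h l z : R) :
  x - y <= h - l -> x + (l + z) <= y + (h + z).
Proof. lra. Qed.

Section TriggerStrategies.
(* Player 1's high/low pure stage equilibria (pH1, qH1), (pL1, qL1), player
   2's (pH2, qH2), (pL2, qL2), the profile (a0, b0) played in round one, and
   the length k of each of the two punishment/reward phases. *)
Variables (R : realType) (A1 A2 : finType) (u1 u2 : A1 -> A2 -> R).
Variables (a0 : A1) (b0 : A2) (k : nat).
Variables (pH1 pL1 pH2 pL2 : {ffun A1 -> R}) (qH1 qL1 qH2 qL2 : {ffun A2 -> R}).
Hypotheses (NH1 : NashStage u1 u2 PP pH1 qH1) (NL1 : NashStage u1 u2 PP pL1 qL1).
Hypotheses (NH2 : NashStage u1 u2 PP pH2 qH2) (NL2 : NashStage u1 u2 PP pL2 qL2).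

Definition phase_play1 (x : A1 * A2) (t : nat) : {ffun A1 -> R} :=
  if (t < k)%N then (if x.1 == a0 then pH1 else pL1)
  else (if x.2 == b0 then pH2 else pL2).
Definition phase_play2 (x : A1 * A2) (t : nat) : {ffun A2 -> R} :=
  if (t < k)%N then (if x.1 == a0 then qH1 else qL1)
  else (if x.2 == b0 then qH2 else qL2).

Definition trigger1 (h : history A1 A2) : {ffun A1 -> R} :=
  if h is x :: h' then phase_play1 x (size h') else pmass R a0.
Definition trigger2 (h : history A1 A2) : {ffun A2 -> R} :=
  if h is x :: h' then phase_play2 x (size h') else pmass R b0.

Lemma phase_Nash x t : NashStage u1 u2 PP (phase_play1 x t) (phase_play2 x t).
Proof. by rewrite /phase_play1 /phase_play2; case: ifP => _; case: ifP. Qed.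

Lemma trigger_available1 : avail_strat1 PP trigger1.
Proof. by case=> [|x h]; [apply: pmass_available | case: (phase_Nash x (size h))]. Qed.

Lemma trigger_available2 : avail_strat2 PP trigger2.
Proof. by case=> [|x h]; [apply: pmass_available | case: (phase_Nash x (size h))]. Qed.

(* After round one the trigger profile is stationary play of stage equilibria. *)
Lemma trigger_subgame_no_dev1 t1 x h n : avail_strat1 PP t1 ->
  cont u1 t1 trigger2 (x :: h) n <= cont u1 trigger1 trigger2 (x :: h) n.
Proof.
exact: (@stationary_no_dev1 _ _ _ u1 u2 PP trigger1 trigger2 [:: x]
          (phase_play1 x) (phase_play2 x) (phase_Nash x)).
Qed.

Lemma trigger_subgame_no_dev2 t2 x h n : avail_strat2 PP t2 ->
  cont u2 trigger1 t2 (x :: h) n <= cont u2 trigger1 trigger2 (x :: h) n.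
Proof.
exact: (@stationary_no_dev2 _ _ _ u1 u2 PP trigger1 trigger2 [:: x]
          (phase_play1 x) (phase_play2 x) (phase_Nash x)).
Qed.

Lemma trigger_value_after u x : cont u trigger1 trigger2 [:: x] (k + k) =
  ueval u (if x.1 == a0 then pH1 else pL1) (if x.1 == a0 then qH1 else qL1) *+ k
  + ueval u (if x.2 == b0 then pH2 else pL2) (if x.2 == b0 then qH2 else qL2) *+ k.
Proof.
rewrite -[[:: x]]cats0 (@cont_stationary _ _ _ u1 u2 PP trigger1 trigger2 [:: x]
  (phase_play1 x) (phase_play2 x) (phase_Nash x) (fun=> erefl) (fun=> erefl)).
rewrite /stationary_value big_split_ord /=.
congr (_ + _); rewrite -[in RHS](card_ord k) -sumr_const; apply: eq_bigr => i _.
  by rewrite /phase_play1 /phase_play2 ltn_ord.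
by rewrite /phase_play1 /phase_play2 ltnNge leq_addr.
Qed.

(* In round one, a deviation of player 1 gains at most the largest one-shot gain
   against b0, and it turns player 1's phase from high to low. *)
Lemma trigger_root_no_dev1 t1 :
  (forall a, u1 a b0 - u1 a0 b0 <= (ueval u1 pH1 qH1 - ueval u1 pL1 qL1) *+ k) ->
  avail_strat1 PP t1 ->
  cont u1 t1 trigger2 [::] (k + k).+1 <= cont u1 trigger1 trigger2 [::] (k + k).+1.
Proof.
move=> gain_le avail_t1; have [a t1_a] := pure_pmass (avail_t1 [::]).
rewrite (cont_pure_round u1 (k + k) t1_a (erefl (pmass R b0))).
rewrite (cont_pure_round u1 (k + k) (erefl (pmass R a0)) (erefl (pmass R b0))).
apply: (@le_trans _ _ (u1 a b0 + cont u1 trigger1 trigger2 [:: (a, b0)] (k + k))).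
  by rewrite lerD2l; apply: trigger_subgame_no_dev1.
rewrite !trigger_value_after /= !eqxx; have [-> // | _] := eqVneq a a0.
by apply: gain_not_worth_loss; rewrite -mulrnBl.
Qed.

Lemma trigger_root_no_dev2 t2 :
  (forall b, u2 a0 b - u2 a0 b0 <= (ueval u2 pH2 qH2 - ueval u2 pL2 qL2) *+ k) ->
  avail_strat2 PP t2 ->
  cont u2 trigger1 t2 [::] (k + k).+1 <= cont u2 trigger1 trigger2 [::] (k + k).+1.
Proof.
move=> gain_le avail_t2; have [b t2_b] := pure_pmass (avail_t2 [::]).
rewrite (cont_pure_round u2 (k + k) (erefl (pmass R a0)) t2_b).
rewrite (cont_pure_round u2 (k + k) (erefl (pmass R a0)) (erefl (pmass R b0))).
apply: (@le_trans _ _ (u2 a0 b + cont u2 trigger1 trigger2 [:: (a0, b)] (k + k))).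
  by rewrite lerD2l; apply: trigger_subgame_no_dev2.
rewrite !trigger_value_after /= !eqxx; have [-> // | _] := eqVneq b b0.
rewrite [_ + ueval u2 pL2 _ *+ k]addrC [_ + ueval u2 pH2 _ *+ k]addrC.
by apply: gain_not_worth_loss; rewrite -mulrnBl.
Qed.

Lemma trigger_in_GLS :
  ~ NashStage u1 u2 PP (pmass R a0) (pmass R b0) ->
  (forall a, u1 a b0 - u1 a0 b0 <= (ueval u1 pH1 qH1 - ueval u1 pL1 qL1) *+ k) ->
  (forall b, u2 a0 b - u2 a0 b0 <= (ueval u2 pH2 qH2 - ueval u2 pL2 qL2) *+ k) ->
  in_GLS u1 u2 PP.
Proof.
move=> not_Nash gain1_le gain2_le.
exists (k + k).+1; split => //; exists trigger1, trigger2; split; last by exists [::].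
split; [exact: trigger_available1 | exact: trigger_available2 |].
case=> [|x h] _; split=> t avail_t.
- by rewrite subn0; apply: trigger_root_no_dev1.
- by rewrite subn0; apply: trigger_root_no_dev2.
- exact: trigger_subgame_no_dev1.
- exact: trigger_subgame_no_dev2.
Qed.
End TriggerStrategies.

Section StageGame.
Variables (R : realType) (A1 A2 : finType) (u1 u2 : A1 -> A2 -> R).
Variables (a1 : A1) (a2 : A2).
Hypothesis all_pure_Nash : forall a b, NashStage u1 u2 PP (pmass R a) (pmass R b).

Lemma pure_Nash_indep1 a b : u1 a b = u1 a1 b.
Proof.
have [_ _ best_a1 _] := all_pure_Nash a1 b.
have [_ _ best_a _] := all_pure_Nash a b.
apply/le_anti/andP; split.
  by have := best_a1 _ (pmass_available R _ a); rewrite !ueval_pmass.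
by have := best_a _ (pmass_available R _ a1); rewrite !ueval_pmass.
Qed.

Lemma pure_Nash_indep2 a b : u2 a b = u2 a a2.
Proof.
have [_ _ _ best_a2] := all_pure_Nash a a2.
have [_ _ _ best_b] := all_pure_Nash a b.
apply/le_anti/andP; split.
  by have := best_a2 _ (pmass_available R _ b); rewrite !ueval_pmass.
by have := best_b _ (pmass_available R _ a2); rewrite !ueval_pmass.
Qed.

Lemma all_Nash_of_pure_Nash r p q :
  available (mixes1 r) p -> available (mixes2 r) q -> NashStage u1 u2 r p q.
Proof.
move=> avail_p avail_q; split=> // [p' [dist_p' _] | q' [dist_q' _]].
  by rewrite !(ueval_indep1 _ pure_Nash_indep1) //; case: avail_p.
by rewrite !(ueval_indep2 _ pure_Nash_indep2) //; case: avail_q.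
Qed.
End StageGame.

Lemma exists_non_Nash_pure (R : realType) (A1 A2 : finType)
    (u1 u2 : A1 -> A2 -> R) (a1 : A1) (a2 : A2) (r : regime) :
  in_GLS u1 u2 r -> exists a0 b0, ~ NashStage u1 u2 PP (pmass R a0) (pmass R b0).
Proof.
move=> [T [_ [s1 [s2 [[avail1 avail2 _] [h [_ not_Nash]]]]]]].
apply: NNPP => no_witness; apply: not_Nash.
apply: (all_Nash_of_pure_Nash a1 a2) => [a b | |]; [| exact: avail1 | exact: avail2].
by apply: NNPP => not_Nash_ab; apply: no_witness; exists a, b.
Qed.

Lemma more_than_one_lt (R : realType) (V : R -> Prop) :
  more_than_one V -> exists x y, [/\ V x, V y & x < y].
Proof.
move=> [x [y [Vx [Vy /eqP]]]]; rewrite neq_lt => /orP[lt_xy | lt_yx].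
  by exists x, y.
by exists y, x.
Qed.

Lemma eventually_dominated (R : realType) (A : finType) (g : A -> R) (d : R) :
  0 < d -> exists K, forall k, (K <= k)%N -> forall a, g a <= d *+ k.
Proof.
move=> d_gt0; set C := \big[Num.max/0]_a g a.
have C_ge0 : 0 <= C by exact: bigmax_ge_id.
have Cd_ge0 : 0 <= C / d by rewrite divr_ge0 // ltW.
exists (Num.Def.archi_bound (C / d)) => k le_Kk a.
apply: le_trans (le_bigmax 0 g a) _; rewrite -/C -mulr_natr.
have := archi_boundP Cd_ge0; rewrite ltr_pdivrMr // => /ltW/le_trans; apply.
by rewrite mulrC ler_pM2l // ler_nat.
Qed.

Theorem mainTheorem17 (R : realType) (A1 A2 : finType)
    (u1 u2 : A1 -> A2 -> R) (a1 : A1) (a2 : A2) :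
  more_than_one (V1 u1 u2 PP) ->
  more_than_one (V2 u1 u2 PP) ->
  in_GLS u1 u2 MM ->
  in_GLS u1 u2 PP.
Proof.
move=> V1_many V2_many LS_mixed.
have [a0 [b0 not_Nash]] := exists_non_Nash_pure a1 a2 LS_mixed.
have [_ [_ [[pL1 [qL1 [NL1 ->]]] [pH1 [qH1 [NH1 ->]]] lt1]]] := more_than_one_lt V1_many.
have [_ [_ [[pL2 [qL2 [NL2 ->]]] [pH2 [qH2 [NH2 ->]]] lt2]]] := more_than_one_lt V2_many.
have [K1 dom1] := eventually_dominated (fun a => u1 a b0 - u1 a0 b0)
                    (etrans (subr_gt0 _ _) lt1).
have [K2 dom2] := eventually_dominated (fun b => u2 a0 b - u2 a0 b0)
                    (etrans (subr_gt0 _ _) lt2).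
apply: (trigger_in_GLS NH1 NL1 NH2 NL2 not_Nash).
  exact: dom1 (leq_maxl K1 K2).
exact: dom2 (leq_maxr K1 K2).
Qed.
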